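(* Let $\mathbb{F}$ be a field of characteristic $0$, let $V\subseteq\{0,1\}^n\subseteq\mathbb{F}^n$, and let $\prec_{\mathrm{lex}}$ be the lexicographic order on monomials of $\mathbb{F}[x_1,\dots,x_n]$ induced by $x_1\succ\dots\succ x_n$. Then for every monomial $m=x^{\alpha}$, $R^{\prec_{\mathrm{lex}}}_{I(V)}(m)\in\mathbb{Z}[x_1,\dots,x_n]$.
   Context: $I(V)$ is the ideal of all polynomials in $\mathbb{F}[x_1,\dots,x_n]$ vanishing on every point of $V$ (the whole ring if $V=\emptyset$). In the lexicographic order, $x^{\alpha}\succ x^{\beta}$ iff the first nonzero entry of $\alpha-\beta\in\mathbb{Z}^n$ is positive. A polynomial $p$ is reducible modulo an ideal $I$ if some $q\in I$ has the same leading ($\prec$-largest) monomial as $p$; every $p$ decomposes uniquely as $p=q+r$ with $q\in I$ and $r$ a linear combination of monomials irreducible modulo $I$, and $R^{\prec}_I(p):=r$. *)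

From HB Require Import structures.
From mathcomp Require Import all_boot all_order all_algebra.
From mathcomp Require Import mpoly.
Set Implicit Arguments. Unset Strict Implicit. Unset Printing Implicit Defensive.
Import Order.TTheory GRing.Theory Num.Theory.
Local Open Scope ring_scope.

(* Lexicographic order on monomials with x_1 > x_2 > ... > x_n
   (variable x_{i+1} is index i : 'I_n):  x^a > x^b  iff the first nonzero
   entry of a - b is positive. *)
Definition lex_gt (n : nat) (a b : 'X_{1..n}) : Prop :=
  exists i : 'I_n, (b i < a i)%N /\ forall j : 'I_n, (j < i)%N -> a j = b j.

Definition lex_lead_is (F : fieldType) (n : nat) (p : {mpoly F[n]})
    (m : 'X_{1..n}) : Prop :=
  m \in msupp p /\ forall m' : 'X_{1..n}, m' \in msupp p -> m' <> m -> lex_gt m m'.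

Definition vanishing_ideal (F : fieldType) (n : nat) (V : ('I_n -> F) -> Prop)
    (p : {mpoly F[n]}) : Prop :=
  forall v, V v -> p.@[v] = 0.

Definition lex_reducible (F : fieldType) (n : nat) (I : {mpoly F[n]} -> Prop)
    (m : 'X_{1..n}) : Prop :=
  exists q, I q /\ lex_lead_is q m.

Definition lex_irreducible_comb (F : fieldType) (n : nat)
    (I : {mpoly F[n]} -> Prop) (r : {mpoly F[n]}) : Prop :=
  forall m, m \in msupp r -> ~ lex_reducible I m.

Definition int_coeffs (F : fieldType) (n : nat) (r : {mpoly F[n]}) : Prop :=
  forall m : 'X_{1..n}, exists z : int, r@_m = z%:~R.

(* Eliminate the variables in lexicographic order.  A remainder r that takes integer
   values on V and is irreducible modulo the polynomials of I(V) in x_k, ..., x_n has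
   degree at most 1 in x_k (x_k^2 - x_k vanishes on V), so r = g + h x_k with g, h in
   the later variables.  For v, w in V with v_k = 1, w_k = 0 and equal later
   coordinates, h(v) = r(v) - r(w).  Moreover h stays irreducible for the set of such
   v: a polynomial q vanishing there with leading monomial m gives q (x_k - chi), where
   chi vanishes exactly at the later coordinates of the points of V with x_k = 0; it
   vanishes on V and has leading monomial x_k m, a monomial of r.  So by induction h,
   and then g = r - h x_k, have integer coefficients.  When no variable is left, r is
   a constant, equal to its value on V, or 0 if V is empty. *)

From HB Require Import structures.
From mathcomp Require Import all_boot all_order all_algebra.
From mathcomp Require Import mpoly.
From Stdlib Require Import Classical ClassicalEpsilon.
Set Implicit Arguments. Unset Strict Implicit. Unset Printing Implicit Defensive.
Import Order.TTheory GRing.Theory Num.Theory.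
Local Open Scope ring_scope.

Section IntImages.
Variable F : fieldType.

Definition is_intr (x : F) := exists z : int, x = z%:~R.

Lemma is_intr0 : is_intr 0. Proof. by exists 0; rewrite mulr0z. Qed.
Lemma is_intr1 : is_intr 1. Proof. by exists 1. Qed.

Lemma is_intrD x y : is_intr x -> is_intr y -> is_intr (x + y).
Proof. by move=> [a ->] [b ->]; exists (a + b); rewrite intrD. Qed.

Lemma is_intrB x y : is_intr x -> is_intr y -> is_intr (x - y).
Proof. by move=> [a ->] [b ->]; exists (a - b); rewrite intrB. Qed.

Lemma is_intrM x y : is_intr x -> is_intr y -> is_intr (x * y).
Proof. by move=> [a ->] [b ->]; exists (a * b); rewrite intrM. Qed.

Lemma is_intrX x k : is_intr x -> is_intr (x ^+ k).
Proof. by move=> [a ->]; exists (a ^+ k); rewrite rmorphXn. Qed.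

Lemma is_intr_zero_one x : x = 0 \/ x = 1 -> is_intr x.
Proof. by case=> ->; [exact: is_intr0 | exact: is_intr1]. Qed.

Variable n : nat.

Definition zero_one (v : 'I_n -> F) := forall i, v i = 0 \/ v i = 1.

Lemma is_intr_meval (p : {mpoly F[n]}) v :
  int_coeffs p -> zero_one v -> is_intr p.@[v].
Proof.
move=> Zp v01; rewrite mevalE; apply: big_ind; [exact: is_intr0|exact: is_intrD|].
move=> m _; apply: is_intrM; first exact: Zp.
apply: big_ind; [exact: is_intr1|exact: is_intrM|] => i _.
exact/is_intrX/is_intr_zero_one.
Qed.

Lemma int_coeffsX (m : 'X_{1..n}) : int_coeffs ('X_[m] : {mpoly F[n]}).
Proof. by move=> c; rewrite mcoeffX; apply: is_intr_zero_one; case: eqP; auto. Qed.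

End IntImages.

Arguments int_coeffsX {F n} m.

Section VarsFrom.
Variables (F : fieldType) (n : nat).
Implicit Types (p q : {mpoly F[n]}) (m : 'X_{1..n}).

Definition mnm_from (k : nat) m := [forall j : 'I_n, (j < k)%N ==> (m j == 0%N)].

Lemma mnm_fromP k m : reflect (forall j : 'I_n, (j < k)%N -> m j = 0%N) (mnm_from k m).
Proof.
apply: (iffP forallP) => h j; last by apply/implyP => /h ->.
by move/implyP: (h j) => /[apply]/eqP.
Qed.

Definition vars_from_pred (k : nat) p := all (mnm_from k) (msupp p).
Arguments vars_from_pred _ _ /.
Definition vars_from k := [qualify a p | vars_from_pred k p].

Lemma vars_fromP k p : reflect {in msupp p, forall m, mnm_from k m} (p \is a vars_from k).
Proof. exact: allP. Qed.

Lemma mnm_fromD k m1 m2 : mnm_from k m1 -> mnm_from k m2 -> mnm_from k (m1 + m2).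
Proof.
by move=> /mnm_fromP h1 /mnm_fromP h2; apply/mnm_fromP => j hj; rewrite mnmDE h1 ?h2.
Qed.

Fact vars_from_subring_closed k : subring_closed (vars_from k).
Proof.
split.
- by rewrite qualifE /= msupp1 /= andbT; apply/mnm_fromP => j _; rewrite mnm0E.
- move=> p q /vars_fromP hp /vars_fromP hq; apply/vars_fromP => m /msuppB_le.
  by rewrite mem_cat => /orP [/hp | /hq].
- move=> p q /vars_fromP hp /vars_fromP hq; apply/vars_fromP => m /msuppM_le.
  by case/allpairsP => -[m1 m2] /= [/hp h1 /hq h2 ->]; apply: mnm_fromD.
Qed.

HB.instance Definition _ k := GRing.isSubringClosed.Build {mpoly F[n]}
  (vars_from_pred k) (vars_from_subring_closed k).

Lemma vars_from0 p : p \is a vars_from 0.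
Proof. by apply/vars_fromP => m _; apply/mnm_fromP. Qed.

Lemma vars_fromXm k m : mnm_from k m -> 'X_[m] \is a vars_from k.
Proof. by move=> hm; rewrite qualifE /= msuppX /= hm. Qed.

Lemma vars_fromX k (i : 'I_n) : (k <= i)%N -> 'X_i \is a vars_from k.
Proof.
move=> hki; apply/vars_fromXm/mnm_fromP => j hj; rewrite mnm1E.
by case: eqP => // eij; move: hj; rewrite -eij ltnNge hki.
Qed.

Lemma vars_fromW k k' p : (k <= k')%N -> p \is a vars_from k' -> p \is a vars_from k.
Proof.
move=> hk /vars_fromP hp; apply/vars_fromP => m /hp /mnm_fromP hm.
by apply/mnm_fromP => j hj; apply: hm (leq_trans hj hk).
Qed.

Lemma meval_vars_from k p (v w : 'I_n -> F) : p \is a vars_from k ->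
  (forall j : 'I_n, (k <= j)%N -> v j = w j) -> p.@[v] = p.@[w].
Proof.
move=> /vars_fromP hp hvw; rewrite !mevalE; apply: eq_big_seq => m /hp /mnm_fromP hm.
congr (_ * _); apply: eq_bigr => j _.
by case: (ltnP j k) => hj; [rewrite hm ?expr0 | rewrite hvw].
Qed.

End VarsFrom.

Arguments mnm_from {n} k m.
Arguments vars_from {F n} k.

Section LexLead.
Variables (F : fieldType) (n : nat).
Implicit Types (p q : {mpoly F[n]}) (m : 'X_{1..n}).

Lemma submUK (i : 'I_n) m : m i != 0%N -> (m - U_(i) + U_(i))%MM = m.
Proof.
move=> hmi; apply: submK; apply/mnm_lepP => j; rewrite mnm1E.
by case: eqP => [<-|]; rewrite ?lt0n.
Qed.

Lemma mcoeffMXU p (i : 'I_n) m :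
  (p * 'X_i)@_m = if m i != 0%N then p@_(m - U_(i)) else 0.
Proof.
case: ifP => hmi; first by rewrite -{1}(submUK hmi) addmC mcoeffMX.
apply/eqP; rewrite mcoeff_eq0 (perm_mem (msuppMX _ _)).
by apply/mapP => -[m' _ hm]; move: hmi; rewrite hm mnmDE mnm1E eqxx.
Qed.

Lemma lex_gtD m1 m2 m3 : lex_gt m1 m2 -> lex_gt (m1 + m3)%MM (m2 + m3)%MM.
Proof.
move=> [i [hi hj]]; exists i; rewrite !mnmDE ltn_add2r; split => // j ji.
by rewrite !mnmDE hj.
Qed.

Lemma lex_lead_mulXB (i : 'I_n) p q m :
  p \is a vars_from i.+1 -> q \is a vars_from i.+1 -> lex_lead_is p m ->
  lex_lead_is (p * ('X_i - q)) (m + U_(i))%MM.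
Proof.
move=> vp vq [pm lead_m].
have /vars_fromP vpq : p * q \is a vars_from i.+1 by rewrite rpredM.
have /vars_fromP vQ : p * ('X_i - q) \is a vars_from i.
  by rewrite rpredM ?rpredB ?vars_fromX // (vars_fromW (leqnSn i)).
have coefQ m' : m' i != 0%N -> (p * ('X_i - q))@_m' = p@_(m' - U_(i)).
  move=> m'i; rewrite mulrBr mcoeffB mcoeffMXU m'i [X in _ - X](_ : _ = 0) ?subr0 //.
  by apply/eqP; rewrite mcoeff_eq0; apply: contra m'i => /vpq /mnm_fromP ->.
have /mnm_fromP m_low : mnm_from i.+1 m by move/vars_fromP: vp; apply.
have mUi : (m + U_(i))%MM i = 1%N by rewrite mnmDE mnm1E eqxx m_low.
split=> [|m' m'Q m'_neq].
  by rewrite mcoeff_msupp coefQ ?mUi // addmK -mcoeff_msupp.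
have /mnm_fromP m'_low := vQ m' m'Q.
have [m'i|m'i] := eqVneq (m' i) 0%N.
  exists i; rewrite mUi m'i; split=> // j ji.
  rewrite mnmDE mnm1E (m_low j (ltnW ji)) (m'_low j ji).
  by case: (i =P j) ji => [->|]; rewrite ?ltnn.
have m'p : (m' - U_(i))%MM \in msupp p by rewrite mcoeff_msupp -coefQ // -mcoeff_msupp.
rewrite -(submUK m'i); apply/lex_gtD/lead_m => // e.
by apply: m'_neq; rewrite -e submUK.
Qed.

End LexLead.

Section TailSeparator.
Variables (F : fieldType) (n k : nat).
Implicit Types (v w : 'I_n -> F) (b : {ffun 'I_n -> bool}).

Definition agree_above v w := forall j : 'I_n, (k < j)%N -> v j = w j.

Definition tail_indicator b : {mpoly F[n]} :=
  \prod_(j : 'I_n | (k < j)%N) (if b j then 'X_j else 1 - 'X_j).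

Lemma tail_indicator_vars b : tail_indicator b \is a vars_from k.+1.
Proof.
by apply: rpred_prod => j kj; case: (b j); rewrite ?rpredB ?rpred1 //; apply: vars_fromX.
Qed.

Lemma meval_tail_indicator_eq1 b v :
  (forall j : 'I_n, (k < j)%N -> v j = (b j)%:R) -> (tail_indicator b).@[v] = 1.
Proof.
move=> vb; rewrite rmorph_prod big1 // => j kj.
by case: (b j) (vb j kj) => vj; rewrite /= ?mevalB ?meval1 mevalXU vj ?subr0.
Qed.

Lemma meval_tail_indicator_eq0 b v (j : 'I_n) :
  zero_one v -> (k < j)%N -> v j <> (b j)%:R -> (tail_indicator b).@[v] = 0.
Proof.
move=> v01 kj vbj; rewrite rmorph_prod (bigD1 j) //=.
by case: (b j) vbj; case: (v01 j) => vj //= _; rewrite ?mevalB ?meval1 mevalXU vj ?subrr mul0r.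
Qed.

Lemma tail_separator (T : ('I_n -> F) -> Prop) :
  exists2 chi : {mpoly F[n]}, chi \is a vars_from k.+1 &
    (forall v w, zero_one v -> T w -> agree_above v w -> chi.@[v] = 0) /\
    (forall v, zero_one v -> ~ (exists2 w, T w & agree_above v w) -> chi.@[v] = 1).
Proof.
pose tail_in_T b := exists2 w, T w & forall j : 'I_n, (k < j)%N -> w j = (b j)%:R.
pose S := [set b | if excluded_middle_informative (tail_in_T b) then true else false].
have inSP b : reflect (tail_in_T b) (b \in S).
  by rewrite inE; case: excluded_middle_informative; constructor.
exists (\prod_(b in S) (1 - tail_indicator b)).
  by apply: rpred_prod => b _; rewrite rpredB ?rpred1 ?tail_indicator_vars.
split=> [v w v01 Tw vw | v v01 noT]; rewrite rmorph_prod.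
  pose bv := [ffun j => v j == 1].
  have vbv j : v j = (bv j)%:R.
    by rewrite ffunE; case: (v01 j) => ->; rewrite ?eqxx // eq_sym oner_eq0.
  have /inSP Sbv : tail_in_T bv by exists w => // j kj; rewrite -vw.
  rewrite (bigD1 bv) //= rmorphB rmorph1 /= meval_tail_indicator_eq1 ?subrr ?mul0r //.
rewrite big1 // => b /inSP [w Tw wb].
have [j [kj vwj]] : exists j : 'I_n, (k < j)%N /\ v j <> w j.
  apply: NNPP => h; apply: noT; exists w => // j kj; apply: NNPP => vwj.
  by apply: h; exists j.
by rewrite rmorphB rmorph1 /= (@meval_tail_indicator_eq0 _ _ j) ?subr0 // -wb.
Qed.

End TailSeparator.

Section Standard.
Variables (F : fieldType) (n : nat).
Implicit Types (V : ('I_n -> F) -> Prop) (q r : {mpoly F[n]}) (m : 'X_{1..n}).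

Definition zero_one_set V := forall v, V v -> zero_one v.

Definition lex_std_from (k : nat) V r := forall m, m \in msupp r ->
  ~ exists2 q, q \is a vars_from k & vanishing_ideal V q /\ lex_lead_is q m.

Lemma lex_std_fromW k k' V r :
  (k <= k')%N -> lex_std_from k V r -> lex_std_from k' V r.
Proof.
by move=> kk' std_r m /std_r nq [q vq qm]; apply: nq; exists q; rewrite ?(vars_fromW kk').
Qed.

Lemma lex_std_deg_le1 (i : 'I_n) V r : zero_one_set V ->
  r \is a vars_from i -> lex_std_from i V r -> forall m, m \in msupp r -> (m i <= 1)%N.
Proof.
move=> V01 /vars_fromP vr std_r m rm; rewrite leqNgt; apply/negP => mi_gt1.
have [d mi] : exists d, m i = d.+2 by case: (m i) mi_gt1 => [|[|d]] //; exists d.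
have /mnm_fromP m_low := vr m rm.
pose m' := (m - U_(i))%MM.
have m'E j : m' j = if i == j then (m j).-1 else m j.
  by rewrite mnmBE mnm1E; case: eqP; rewrite ?subn1 ?subn0.
have m'i : m' i = d.+1 by rewrite m'E eqxx mi.
apply: (std_r m rm); exists ('X_[m] - 'X_[m']); last split.
- by rewrite rpredB // vars_fromXm //; apply/mnm_fromP => j ji; rewrite ?m'E m_low //; case: eqP.
- move=> v /V01 v01; rewrite mevalB !mevalX; apply/eqP; rewrite subr_eq0; apply/eqP.
  apply: eq_bigr => j _; rewrite m'E; case: eqP => [<-|//].
  by rewrite mi; case: (v01 i) => ->; rewrite ?expr1n // !expr0n.
- split=> [|m''].
    have /negbTE m'_neq : m' != m by apply/eqP => e; move: m'i; rewrite e mi => /esym/n_Sn.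
    by rewrite mcoeff_msupp mcoeffB !mcoeffX eqxx m'_neq subr0 oner_eq0.
  move=> /msuppB_le; rewrite !msuppX mem_cat !mem_seq1 => /orP [/eqP -> //|/eqP -> _].
  exists i; rewrite m'i mi; split=> // j ji; rewrite m'E; by case: eqP ji => [->|]; rewrite ?ltnn.
Qed.

End Standard.

Section Shift.
Variables (F : fieldType) (n : nat).
Implicit Types (V : ('I_n -> F) -> Prop) (p q r h : {mpoly F[n]}) (m : 'X_{1..n}).

Lemma lex_std_from_sub k V p r :
  {subset msupp p <= msupp r} -> lex_std_from k V r -> lex_std_from k V p.
Proof. by move=> pr std_r m /pr; apply: std_r. Qed.

Definition paired_top (i : 'I_n) V v :=
  [/\ V v, v i = 1 & exists2 w, V w /\ w i = 0 & agree_above i v w].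

Lemma paired_top_zero_one (i : 'I_n) V : zero_one_set V -> zero_one_set (paired_top i V).
Proof. by move=> V01 v [/V01]. Qed.

Lemma lex_std_shift (i : 'I_n) V r h : zero_one_set V -> lex_std_from i V r ->
  (forall m, h@_m = r@_(m + U_(i))) -> lex_std_from i.+1 (paired_top i V) h.
Proof.
move=> V01 std_r hr m hm [q vq [qV qm]].
have [chi vchi [chi0 chi1]] := tail_separator i (fun w => V w /\ w i = 0).
apply: (std_r (m + U_(i))%MM); first by rewrite mcoeff_msupp -hr -mcoeff_msupp.
exists (q * ('X_i - chi)); last split; last exact: lex_lead_mulXB.
  by rewrite rpredM ?rpredB ?vars_fromX // (vars_fromW (leqnSn i)).
(* Where x_i = 0 the separator vanishes; where x_i = 1, either q vanishes or chi = 1. *)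
move=> v Vv; rewrite mevalM mevalB mevalXU.
have [vi|vi] := V01 v Vv i.
  by rewrite (chi0 v v (V01 v Vv) (conj Vv vi)) // vi subrr mulr0.
have [/qV -> | not_top] := classic (paired_top i V v); first by rewrite mul0r.
rewrite chi1 ?vi ?subrr ?mulr0 //; first exact: V01.
by move=> -[w Tw vw]; apply: not_top; split=> //; exists w.
Qed.

End Shift.

Section Induction.
Variables (F : fieldType) (n : nat).
Implicit Types (V : ('I_n -> F) -> Prop) (r : {mpoly F[n]}) (m : 'X_{1..n}).

Lemma mcoeff_sumX_inj (s : seq 'X_{1..n}) (P : pred 'X_{1..n})
    (f : 'X_{1..n} -> 'X_{1..n}) (a : 'X_{1..n} -> F) m m0 :
  uniq s -> (forall m', m' \in s -> P m' -> (f m' == m) = (m' == m0)) ->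
  (\sum_(m' <- s | P m') a m' *: 'X_[f m'])@_m = if (m0 \in s) && P m0 then a m0 else 0.
Proof.
move=> s_uniq f_inj; rewrite raddf_sum /= big_mkcond /=.
rewrite (eq_big_seq (fun m' => if m' == m0 then (if P m' then a m' else 0) else 0)).
  case m0s: (m0 \in s); last first.
    by rewrite big1_seq //= => m' m's; case: eqP => // e; move: m0s; rewrite -e m's.
  by rewrite (bigD1_seq m0) //= eqxx big1 ?addr0 // => m' /negbTE ->.
move=> m' m's; case Pm': (P m'); last by case: eqP.
by rewrite mcoeffZ mcoeffX (f_inj _ m's Pm'); case: eqP; rewrite ?mulr1 ?mulr0.
Qed.

Lemma mpoly_split_var (i : 'I_n) r :
  exists2 h, (forall m, h@_m = r@_(m + U_(i))%MM) &
    forall m, (r - h * 'X_i)@_m = if m i == 0%N then r@_m else 0.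
Proof.
pose h := \sum_(m <- msupp r | m i != 0%N) r@_m *: 'X_[m - U_(i)].
have hE m : h@_m = r@_(m + U_(i))%MM.
  rewrite (@mcoeff_sumX_inj _ _ _ _ _ (m + U_(i))%MM) //; last first.
    by move=> m' _ m'i; apply/eqP/eqP => [<-|->]; rewrite ?submUK ?addmK.
  rewrite mnmDE mnm1E eqxx addn1 andbT.
  by case: ifPn => // /negbTE; rewrite mcoeff_msupp => /negbFE /eqP.
exists h => // m; rewrite mcoeffB mcoeffMXU hE.
by case: eqP => [|/eqP mi]; rewrite ?subr0 //= submUK ?subrr.
Qed.

Definition std_int_coeffs (k : nat) := forall V, zero_one_set V ->
  forall r, r \is a vars_from k -> lex_std_from k V r ->
  (forall v, V v -> is_intr r.@[v]) -> int_coeffs r.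

Lemma std_int_coeffs_top : std_int_coeffs n.
Proof.
move=> V V01 r /vars_fromP vr std_r Zr.
have rC : r = (r@_0%MM)%:MP.
  apply/mpolyP => m; rewrite mcoeffC; have [->|m0] := eqVneq m 0%MM; rewrite ?mulr1 ?mulr0 //.
  apply/memN_msupp_eq0; apply: contra m0 => /vr /mnm_fromP m_low.
  by apply/eqP/mnmP => j; rewrite mnm0E m_low.
suff Zr0 : is_intr r@_0%MM.
  by move=> m; rewrite rC mcoeffC; apply: is_intrM Zr0 (is_intr_zero_one _); case: eqP; auto.
have [[v Vv]|noV] := classic (exists v, V v); first by have := Zr v Vv; rewrite {1}rC mevalC.
have [->|r0] := eqVneq r@_0%MM 0; first exact: is_intr0.
exfalso; apply: (std_r 0%MM); first by rewrite mcoeff_msupp.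
exists 1; rewrite ?rpred1 //; split=> [v Vv|]; first by case: noV; exists v.
by split=> [|m']; rewrite msupp1 mem_seq1 // => /eqP.
Qed.

Lemma std_int_coeffs_step (i : 'I_n) : std_int_coeffs i.+1 -> std_int_coeffs i.
Proof.
move=> IH V V01 r vr std_r Zr.
have deg1 := lex_std_deg_le1 V01 vr std_r.
move/vars_fromP: vr => vr.
have [h hE gE] := mpoly_split_var i r.
set g := r - h * 'X_i in gE.
have rE : r = g + h * 'X_i by rewrite subrK.
have meval_r v : r.@[v] = g.@[v] + h.@[v] * v i by rewrite {1}rE mevalD mevalM mevalXU.
have g_sub : {subset msupp g <= msupp r}.
  by move=> m; rewrite !mcoeff_msupp gE; case: ifP => _ //; rewrite eqxx.
have vg : g \is a vars_from i.+1.
  apply/vars_fromP => m gm; have /mnm_fromP m_low := vr m (g_sub m gm).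
  move: gm; rewrite mcoeff_msupp gE; have [mi _|_] := eqVneq (m i) 0%N; last by rewrite eqxx.
  by apply/mnm_fromP => j; rewrite ltnS leq_eqVlt => /orP [/eqP/val_inj -> | /m_low].
have vh : h \is a vars_from i.+1.
  apply/vars_fromP => m; rewrite mcoeff_msupp hE -mcoeff_msupp => rmU.
  have /mnm_fromP mU_low := vr _ rmU.
  have := deg1 _ rmU; rewrite mnmDE mnm1E eqxx addn1 ltnS leqn0 => /eqP mi.
  apply/mnm_fromP => j; rewrite ltnS leq_eqVlt => /orP [/eqP/val_inj -> // | ji].
  by have := mU_low j ji; rewrite mnmDE mnm1E; case: eqP ji => [->|_ _]; rewrite ?ltnn ?addn0.
have Zh : int_coeffs h.
  apply: (IH _ (paired_top_zero_one V01) h vh (lex_std_shift V01 std_r hE)).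
  move=> v [Vv vi [w [Vw wi] vw]].
  have g_vw : g.@[v] = g.@[w] by apply: (meval_vars_from vg) => j /vw.
  have -> : h.@[v] = r.@[v] - r.@[w].
    by rewrite !meval_r vi wi g_vw mulr1 mulr0 addr0 addrC addKr.
  by apply: is_intrB; apply: Zr.
have Zg : int_coeffs g.
  apply: (IH V V01 g vg (lex_std_fromW (leqnSn i) (lex_std_from_sub g_sub std_r))).
  move=> v Vv; have -> : g.@[v] = r.@[v] - h.@[v] * v i by rewrite meval_r addrK.
  apply: is_intrB (Zr v Vv) (is_intrM (is_intr_meval Zh (V01 v Vv)) _).
  exact: is_intr_zero_one (V01 v Vv i).
move=> m; rewrite rE mcoeffD mcoeffMXU; apply: is_intrD (Zg m) _.
by case: ifP => _; [exact: Zh | exact: is_intr0].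
Qed.

Lemma std_int_coeffs0 : std_int_coeffs 0.
Proof.
suff std_from d k : (k + d)%N = n -> std_int_coeffs k by exact: (std_from n).
elim: d k => [|d IH] k; first by rewrite addn0 => ->; exact: std_int_coeffs_top.
move=> kdn; have kn : (k < n)%N by rewrite -kdn addnS ltnS leq_addr.
by apply: (@std_int_coeffs_step (Ordinal kn)); apply: IH; rewrite addSnnS.
Qed.

End Induction.

Theorem mainTheorem7 (F : fieldType) (n : nat) (V : ('I_n -> F) -> Prop)
  (hchar : [pchar F] =i pred0)
  (hV : forall v, V v -> forall i : 'I_n, v i = 0 \/ v i = 1)
  (alpha : 'X_{1..n}) (q r : {mpoly F[n]}) :
  vanishing_ideal V q ->
  lex_irreducible_comb (vanishing_ideal V) r ->
  'X_[alpha] = q + r ->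
  int_coeffs r.
Proof.
move=> qV r_irr alpha_qr.
apply: (std_int_coeffs0 hV (vars_from0 r)) => [m rm [q' _ q'_lead] | v Vv].
  by apply: (r_irr m rm); exists q'.
have -> : r = 'X_[alpha] - q by rewrite alpha_qr [q + r]addrC addrK.
rewrite mevalB (qV v Vv) subr0.
exact: is_intr_meval (int_coeffsX alpha) (hV v Vv).
Qed.
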